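(* Let $\kappa_3,\kappa_4,q$ be constants and let $y$ be a $C^3$ function on an open interval of $r>0$ on which $\kappa_3r^2+\kappa_4\neq0$. Then $y$ satisfies the third-order equation $$(\kappa_3r^2+\kappa_4)r^3y'''+(\kappa_3r^2-2\kappa_4)r^2y''-(\kappa_3r^2+2\kappa_4)ry'+8\kappa_4y=8-\frac{24q^2}{r^2}$$ if and only if there exists a constant $\kappa_2$ such that $y$ satisfies the second-order equation $$(\kappa_3r^2+\kappa_4)y''+\kappa_3ry'-\frac{2\kappa_4}{r^2}y+\frac{2}{r^2}=2\kappa_2r^2+\frac{4q^2}{r^4}.$$
   Context: Primes denote derivatives with respect to $r$. (In the paper, $y=b^2$ is the metric function of a static spherically symmetric solution of conformal Killing gravity coupled to linear electrodynamics with total charge $q$, $q^2=q_e^2+q_m^2$.) *)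

From Stdlib Require Import Reals.
From Coquelicot Require Import Coquelicot.
Open Scope R_scope.

Definition in_oint (a b : Rbar) (r : R) : Prop := Rbar_lt a r /\ Rbar_lt r b.

Definition C3_on (a b : Rbar) (y : R -> R) : Prop :=
  forall r, in_oint a b r ->
    (forall k, (k <= 3)%nat -> ex_derive_n y k r) /\ continuous (Derive_n y 3) r.

(* Dividing the second-order expression, with 4 q^2 / r^4 moved to the left,
   by r^2 gives a function whose derivative is exactly the third-order
   expression (minus its right-hand side) divided by r^5.  So on an interval
   of positive radii the third-order equation says that this function has
   vanishing derivative, i.e. is a constant, and calling the constant 2 k2 is
   the second-order equation. *)
From Stdlib Require Import Reals Lra.
From Coquelicot Require Import Coquelicot.
Open Scope R_scope.

Lemma in_oint_pos (a b : Rbar) (r : R) :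
  Rbar_le 0 a -> in_oint a b r -> 0 < r.
Proof. intros Ha [Har _]; exact (Rbar_le_lt_trans _ _ _ Ha Har). Qed.

Lemma in_oint_inhabited (a b : Rbar) :
  Rbar_le 0 a -> Rbar_lt a b -> exists r, in_oint a b r.
Proof.
intros Ha Hab; unfold in_oint.
destruct a as [a| |], b as [b| |]; simpl in *; try tauto.
- exists ((a + b) / 2); simpl; split; lra.
- exists (a + 1); simpl; split; lra.
Qed.

Lemma in_oint_between (a b : Rbar) (r1 r2 x : R) :
  in_oint a b r1 -> in_oint a b r2 -> Rmin r1 r2 <= x <= Rmax r1 r2 ->
  in_oint a b x.
Proof.
intros [Ha1 Hb1] [Ha2 Hb2] [Hx1 Hx2]; split.
- apply Rbar_lt_le_trans with (Rmin r1 r2); [|exact Hx1].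
  unfold Rmin; destruct (Rle_dec r1 r2); assumption.
- apply Rbar_le_lt_trans with (Rmax r1 r2); [exact Hx2|].
  unfold Rmax; destruct (Rle_dec r1 r2); assumption.
Qed.

Lemma in_oint_locally (a b : Rbar) (r : R) :
  in_oint a b r -> locally r (in_oint a b).
Proof.
intros [Har Hrb]; apply filter_and.
- exact (open_Rbar_gt' r a Har).
- exact (open_Rbar_lt' r b Hrb).
Qed.

Lemma in_oint_derive0_const (a b : Rbar) (f : R -> R) :
  (forall x, in_oint a b x -> is_derive f x 0) ->
  forall r1 r2, in_oint a b r1 -> in_oint a b r2 -> f r1 = f r2.
Proof.
intros Hf r1 r2 Hr1 Hr2.
assert (Hin : forall x, Rmin r1 r2 <= x <= Rmax r1 r2 -> in_oint a b x)
  by (intros x Hx; exact (in_oint_between a b r1 r2 x Hr1 Hr2 Hx)).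
destruct (MVT_gen f r1 r2 (fun _ => 0)) as [c [_ Hc]].
- intros x Hx; apply Hf, Hin; lra.
- intros x Hx; apply continuity_pt_filterlim.
  apply (ex_derive_continuous f x); exists 0; apply Hf, Hin, Hx.
- lra.
Qed.

Lemma in_oint_const_is_derive0 (a b : Rbar) (f : R -> R) (c r : R) :
  (forall x, in_oint a b x -> f x = c) -> in_oint a b r -> is_derive f r 0.
Proof.
intros Hf Hr.
apply is_derive_ext_loc with (fun _ => c).
- apply filter_imp with (in_oint a b); [|exact (in_oint_locally a b r Hr)].
  intros x Hx; symmetry; exact (Hf x Hx).
- exact (is_derive_const (V := R_NormedModule) c r).
Qed.

Definition first_integral (k3 k4 q : R) (y : R -> R) (r : R) : R :=
  ((k3 * r ^ 2 + k4) * Derive_n y 2 r + k3 * r * Derive_n y 1 r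
   - 2 * k4 / r ^ 2 * y r + 2 / r ^ 2 - 4 * q ^ 2 / r ^ 4) / r ^ 2.

Definition third_order_residual (k3 k4 q : R) (y : R -> R) (r : R) : R :=
  (k3 * r ^ 2 + k4) * r ^ 3 * Derive_n y 3 r
  + (k3 * r ^ 2 - 2 * k4) * r ^ 2 * Derive_n y 2 r
  - (k3 * r ^ 2 + 2 * k4) * r * Derive_n y 1 r
  + 8 * k4 * y r - (8 - 24 * q ^ 2 / r ^ 2).

Lemma is_derive_first_integral (k3 k4 q : R) (y : R -> R) (r : R) :
  0 < r -> (forall k, (k <= 3)%nat -> ex_derive_n y k r) ->
  is_derive (first_integral k3 k4 q y) r
    (third_order_residual k3 k4 q y r / r ^ 5).
Proof.
intros Hr Hy; unfold first_integral, third_order_residual.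
assert (Hr0 : r <> 0) by lra.
assert (Hy1 : ex_derive y r) by (apply (Hy 1%nat); auto).
assert (Hy2 : ex_derive (Derive_n y 1) r) by (apply (Hy 2%nat); auto).
assert (Hy3 : ex_derive (Derive_n y 2) r) by (apply (Hy 3%nat); auto).
auto_derive.
- repeat split; try assumption;
    repeat apply Rmult_integral_contrapositive_currified; lra.
- simpl Derive_n; field; exact Hr0.
Qed.

Lemma first_integral_eq (k3 k4 q k2 : R) (y : R -> R) (r : R) :
  0 < r ->
  (k3 * r ^ 2 + k4) * Derive_n y 2 r + k3 * r * Derive_n y 1 r
    - 2 * k4 / r ^ 2 * y r + 2 / r ^ 2 = 2 * k2 * r ^ 2 + 4 * q ^ 2 / r ^ 4 <->
  first_integral k3 k4 q y r = 2 * k2.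
Proof.
intros Hr; unfold first_integral.
split; intros Heq.
- rewrite Heq; field; lra.
- rewrite <- Heq; field; lra.
Qed.

Lemma third_order_residual_eq (k3 k4 q : R) (y : R -> R) (r : R) :
  0 < r ->
  (k3 * r ^ 2 + k4) * r ^ 3 * Derive_n y 3 r
    + (k3 * r ^ 2 - 2 * k4) * r ^ 2 * Derive_n y 2 r
    - (k3 * r ^ 2 + 2 * k4) * r * Derive_n y 1 r
    + 8 * k4 * y r = 8 - 24 * q ^ 2 / r ^ 2 <->
  third_order_residual k3 k4 q y r / r ^ 5 = 0.
Proof.
intros Hr; unfold third_order_residual.
assert (Hr5 : 0 < r ^ 5) by (apply pow_lt, Hr).
split; intros Heq.
- rewrite Heq; unfold Rdiv; ring.
- assert (Hnum : forall u, u / r ^ 5 = 0 -> u = 0).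
  { intros u Hu; rewrite <- (Rmult_0_l (r ^ 5)), <- Hu; field; lra. }
  apply Hnum in Heq; lra.
Qed.

Theorem proposition12 (k3 k4 q : R) (a b : Rbar) (y : R -> R) :
  Rbar_le (Finite 0) a -> Rbar_lt a b ->
  C3_on a b y ->
  (forall r, in_oint a b r -> k3 * r ^ 2 + k4 <> 0) ->
  ((forall r, in_oint a b r ->
      (k3 * r ^ 2 + k4) * r ^ 3 * Derive_n y 3 r
      + (k3 * r ^ 2 - 2 * k4) * r ^ 2 * Derive_n y 2 r
      - (k3 * r ^ 2 + 2 * k4) * r * Derive_n y 1 r
      + 8 * k4 * y r
      = 8 - 24 * q ^ 2 / r ^ 2)
   <->
   (exists k2 : R, forall r, in_oint a b r ->
      (k3 * r ^ 2 + k4) * Derive_n y 2 r + k3 * r * Derive_n y 1 r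
      - 2 * k4 / r ^ 2 * y r + 2 / r ^ 2
      = 2 * k2 * r ^ 2 + 4 * q ^ 2 / r ^ 4)).
Proof.
intros Ha Hab Hy _.
set (G := first_integral k3 k4 q y).
assert (HG' : forall r, in_oint a b r ->
          is_derive G r (third_order_residual k3 k4 q y r / r ^ 5)).
{ intros r Hr; apply is_derive_first_integral;
    [exact (in_oint_pos a b r Ha Hr) | apply (Hy r Hr)]. }
split.
- intros Heq3.
  destruct (in_oint_inhabited a b Ha Hab) as [r0 Hr0].
  exists (G r0 / 2); intros r Hr.
  apply first_integral_eq; [exact (in_oint_pos a b r Ha Hr)|].
  replace (2 * (G r0 / 2)) with (G r0) by field.
  apply (in_oint_derive0_const a b G); [|exact Hr|exact Hr0].
  intros x Hx.
  rewrite <- (proj1 (third_order_residual_eq k3 k4 q y x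
                       (in_oint_pos a b x Ha Hx)) (Heq3 x Hx)).
  exact (HG' x Hx).
- intros [k2 Heq2] r Hr.
  apply third_order_residual_eq; [exact (in_oint_pos a b r Ha Hr)|].
  rewrite <- (is_derive_unique _ _ _ (HG' r Hr)).
  apply is_derive_unique, (in_oint_const_is_derive0 a b G (2 * k2)); [|exact Hr].
  intros x Hx; apply first_integral_eq;
    [exact (in_oint_pos a b x Ha Hx) | exact (Heq2 x Hx)].
Qed.
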